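(* Let $K$ be a field. For arbitrary integers $r \geq 1$ and $s \geq 1$, there exist an integer $n$ and a monomial ideal $I$ of the polynomial ring $S = K[x_1, \ldots, x_n]$ (with each $\deg x_i = 1$) such that $\operatorname{reg}(S/I) = r$ and $\deg h_{S/I}(\lambda) = s$.
   Context: For a homogeneous ideal $I$ of $S = K[x_1,\ldots,x_n]$ (standard grading) with $\dim S/I = d$, the Hilbert series of $S/I$ can be written uniquely as $H_{S/I}(\lambda) = h_{S/I}(\lambda)/(1-\lambda)^d$ with $h_{S/I}(\lambda) = h_0 + h_1\lambda + \cdots + h_s\lambda^s \in \mathbb{Z}[\lambda]$, $h_s \neq 0$; $h_{S/I}(\lambda)$ is called the $h$-polynomial of $S/I$. $\operatorname{reg}(S/I)$ denotes the Castelnuovo--Mumford regularity of $S/I$. *)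

From HB Require Import structures.
From mathcomp Require Import all_boot all_order all_algebra.
Set Implicit Arguments. Unset Strict Implicit. Unset Printing Implicit Defensive.
Import Order.TTheory GRing.Theory Num.Theory.
Local Open Scope ring_scope.

(* A monomial x^a of S = K[x_1..x_n] is encoded by its exponent vector
   a : {ffun 'I_n -> nat}.  A monomial ideal I of S is encoded by a finite
   list G of monomial generators (every monomial ideal is finitely
   generated, Dickson's lemma).  The monomial x^a lies in I = (G) iff some
   generator divides it. *)
Definition expvec (n : nat) := {ffun 'I_n -> nat}.

Definition mdivides n (g a : expvec n) : bool := [forall i, (g i <= a i)%N].

Definition in_mideal n (G : seq (expvec n)) (a : expvec n) : bool :=
  has (fun g => mdivides g a) G.

Definition mdeg n (a : expvec n) : nat := (\sum_(i < n) a i)%N.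

(* dim_K (S/I)_k = number of monomials of degree k not in I
   (the standard monomials form a K-basis of S/I). *)
Definition hilbf n (G : seq (expvec n)) (k : nat) : nat :=
  #|[set a : {ffun 'I_n -> 'I_k.+1} |
      ((\sum_(i < n) (a i : nat))%N == k) &&
      ~~ in_mideal G [ffun i => (a i : nat)]]|.

(* Krull dimension of S/I for a monomial ideal I: the largest #|F| such that
   the monomial prime (x_i : i \notin F) contains I, i.e. no generator of I
   is supported inside F. *)
Definition mindep n (G : seq (expvec n)) (F : {set 'I_n}) : bool :=
  ~~ has (fun g : expvec n => [forall i, (0 < g i)%N ==> (i \in F)]) G.

Definition krull_dim n (G : seq (expvec n)) (d : nat) : Prop :=
  (exists F : {set 'I_n}, mindep G F /\ #|F| = d) /\
  (forall F : {set 'I_n}, mindep G F -> (#|F| <= d)%N).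

(* h is the h-polynomial of S/I: with d = dim S/I,
   H_{S/I}(lambda) * (1 - lambda)^d = h(lambda) as formal power series,
   i.e. h_m = \sum_{j <= min(m,d)} (-1)^j C(d,j) H(S/I, m - j) for all m. *)
Definition is_hpoly n (G : seq (expvec n)) (h : {poly int}) : Prop :=
  exists d : nat, krull_dim G d /\
    forall m : nat,
      h`_m = \sum_(j < (minn m d).+1)
               (-1) ^+ j * ('C(d, j))%:Z * (hilbf G (m - j)%N)%:Z.

(* Graded Betti numbers beta_{i,b}(S/I) = dim_K Tor_i^S(S/I, K)_b, computed
   as the multidegree-b part of the Koszul homology H_i(x_1..x_n; S/I)
   (the Koszul complex resolves K).  In multidegree b, the Koszul chain
   group K_i(x; S/I)_b has K-basis the elements x^(b - 1_F) e_F with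
   #|F| = i, F inside supp b and x^(b - 1_F) \notin I. *)
Definition kvalid n (G : seq (expvec n)) (b : expvec n) (F : {set 'I_n}) : bool :=
  [forall k in F, (0 < b k)%N] &&
  ~~ in_mideal G [ffun k => (b k - (k \in F))%N].

(* matrix (row-vector convention) of the Koszul differential
   d_i : K_i(x;S/I)_b -> K_{i-1}(x;S/I)_b, with rows/columns indexed by all
   subsets of 'I_n (entries for non-basis subsets are 0):
   d(m e_F) = \sum_{k in F} (-1)^{#{l in F, l < k}} x_k m e_{F \ k}. *)
Definition kdiff (K : fieldType) n (G : seq (expvec n)) (b : expvec n) (i : nat)
  : 'M[K]_(#|{set 'I_n}|) :=
  \matrix_(p, q)
    (let F : {set 'I_n} := enum_val p in let H : {set 'I_n} := enum_val q in
     if [&& #|F| == i, kvalid G b F & kvalid G b H] then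
       \sum_(k in F) (if H == F :\ k
                      then (-1) ^+ #|[set l in F | (l < k)%N]| else 0)
     else 0).

Definition betti (K : fieldType) n (G : seq (expvec n)) (i : nat) (b : expvec n)
  : nat :=
  (#|[set F : {set 'I_n} | (#|F| == i) && kvalid G b F]|
     - \rank (kdiff K G b i) - \rank (kdiff K G b i.+1))%N.

Definition is_reg (K : fieldType) n (G : seq (expvec n)) (r : int) : Prop :=
  (exists (i : nat) (b : expvec n),
      betti K G i b <> 0%N /\ (mdeg b)%:Z - i%:Z = r) /\
  (forall (i : nat) (b : expvec n),
      betti K G i b <> 0%N -> (mdeg b)%:Z - i%:Z <= r).

(* Two families of monomial ideals realise every pair (r, s).  For r <= s let
   e = s - r and I = (x_0^(r+1), x_0 x_1, ..., x_0 x_e): the standard monomials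
   are those of K[x_1, ..., x_e] together with x_0, ..., x_0^r, so dim S/I = e and
   h = 1 + (1 - lambda)^e (lambda + ... + lambda^r) has degree r + e = s.  For
   r > s let p = r - s and I = (y^(r+1), x_i x_j, x_j y, x_j z^(s+j)) in
   K[y, z, x_0, ..., x_(p-1)]: only z is free modulo I, so dim S/I = 1, and
   h = 1 + (p+1) lambda + lambda^2 + ... + lambda^s.
   In both cases reg S/I = r.  The minimal generator x_v^(r+1) gives a nonzero
   beta_(1,r+1).  Conversely, above degree r every standard monomial is divisible
   by some variable x_w, w in W, and stays standard when multiplied by any such
   variable.  In a multidegree b with deg b - i > r this matches the Koszul faces
   containing w with those avoiding it (F |-> F :\ w), so that the ranks of d_i
   and d_(i+1) add up to at least the number of faces, and beta_(i,b) = 0. *)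

From HB Require Import structures.
From mathcomp Require Import all_boot all_order all_algebra.
From mathcomp Require Import zify.
Set Implicit Arguments. Unset Strict Implicit. Unset Printing Implicit Defensive.
Import Order.TTheory GRing.Theory Num.Theory.
Local Open Scope ring_scope.

Lemma mxrank_ge_diag_minor (F : fieldType) N m (A : 'M[F]_N) (f g : 'I_m -> 'I_N) :
  (forall j, A (f j) (g j) != 0) -> (forall j k, j != k -> A (f j) (g k) = 0) ->
  (m <= \rank A)%N.
Proof.
move=> Adiag Aoff.
pose P : 'M[F]_(m, N) := \matrix_(j, l) (f j == l)%:R.
pose Q : 'M[F]_(N, m) := \matrix_(l, k) (l == g k)%:R.
pose d : 'rV[F]_m := \row_j A (f j) (g j).
have minorE : P *m A *m Q = diag_mx d.
  apply/matrixP => j k; rewrite !mxE.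
  rewrite (bigD1 (g k)) //= big1 ?addr0; last first.
    by move=> l /negPf nl; rewrite !mxE nl mulr0.
  rewrite !mxE eqxx mulr1 (bigD1 (f j)) //= big1 ?addr0; last first.
    by move=> l nl; rewrite !mxE eq_sym (negPf nl) mul0r.
  rewrite !mxE eqxx mul1r.
  have [->|njk] := eqVneq j k; first by rewrite mulr1n.
  by rewrite Aoff // mulr0n.
have d_unit : diag_mx d \in unitmx.
  rewrite unitmxE det_diag unitfE; apply/prodf_neq0 => j _; rewrite mxE; exact: Adiag.
rewrite -(mxrank_unit d_unit) -minorE.
exact: leq_trans (mxrankM_maxl _ _) (mxrankM_maxr _ _).
Qed.

Lemma sum_setD1_eq (R : nmodType) n (F H : {set 'I_n}) v (t : 'I_n -> R) :
  v \in F -> v \notin H ->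
  \sum_(k in F) (if H == F :\ k then t k else 0) = if H == F :\ v then t v else 0.
Proof.
move=> vF vH; rewrite (bigD1 v) //= big1 ?addr0 // => k /andP[kF nkv].
case: eqP => // HE; case/negP: vH.
by rewrite HE in_setD1 eq_sym nkv.
Qed.

Lemma card_ord_geq (m c : nat) : #|[set j : 'I_m | (c <= j)%N]| = (m - c)%N.
Proof.
rewrite -sum1_card big_mkcond; under eq_bigr => j _ do rewrite inE.
rewrite -(big_mkord xpredT (fun j => if (c <= j)%N then 1%N else 0%N)).
elim: m => [|m IH]; first by rewrite big_geq.
by rewrite big_nat_recr // IH /=; case: (leqP c m) => cm; lia.
Qed.

Section Monomials.
Variable n : nat.
Implicit Types (G : seq (expvec n)) (b c : expvec n) (F : {set 'I_n}) (v : 'I_n).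

Definition varpow v m : expvec n := [ffun k => if k == v then m else 0%N].
Definition mulvar c v : expvec n := [ffun k => (c k + (k == v))%N].

Lemma in_mideal_mono G c c' :
  (forall i, (c i <= c' i)%N) -> in_mideal G c -> in_mideal G c'.
Proof.
move=> le_cc' /hasP [g gG /forallP g_c]; apply/hasP; exists g => //.
by apply/forallP => i; exact: leq_trans (g_c i) (le_cc' i).
Qed.

Lemma mdeg_varpow v m : mdeg (varpow v m) = m.
Proof.
rewrite /mdeg (bigD1 v) //= ffunE eqxx big1 ?addn0 // => k nkv.
by rewrite ffunE (negPf nkv).
Qed.

Lemma mdeg_sub_set b F : [forall k in F, (0 < b k)%N] ->
  mdeg [ffun k => (b k - (k \in F))%N] = (mdeg b - #|F|)%N.
Proof.
move=> /forall_inP b_pos.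
have cardF : (\sum_(i < n) (i \in F : nat))%N = #|F|.
  by rewrite -sum1_card [in RHS]big_mkcond; apply: eq_bigr => i _; case: (i \in F).
rewrite /mdeg -cardF.
have -> : (\sum_(i < n) b i =
    \sum_(i < n) ([ffun k => (b k - (k \in F))%N] i + (i \in F)))%N.
  apply: eq_bigr => i _; rewrite ffunE subnK //.
  by case iF: (i \in F) => //; exact: b_pos.
by rewrite big_split /= addnK.
Qed.

End Monomials.

(** * Koszul homology and regularity *)

Section KoszulCone.
Variables (K : fieldType) (n : nat) (G : seq (expvec n)) (b : expvec n).
Implicit Types (F H : {set 'I_n}) (v : 'I_n).

Definition kbasis (i : nat) := [set F : {set 'I_n} | (#|F| == i) && kvalid G b F].

Lemma kdiffE i F H :
  kdiff K G b i (enum_rank F) (enum_rank H) =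
  if [&& #|F| == i, kvalid G b F & kvalid G b H] then
    \sum_(k in F) (if H == F :\ k then (-1) ^+ #|[set l in F | (l < k)%N]| else 0)
  else 0.
Proof. by rewrite /kdiff mxE !enum_rankK. Qed.

Lemma kvalid_subset F F' :
  F \subset F' -> [forall k in F', (0 < b k)%N] -> kvalid G b F -> kvalid G b F'.
Proof.
move=> sFF' b_pos /andP[_ F_std]; rewrite /kvalid b_pos /=.
apply: contra F_std; apply: in_mideal_mono => k; rewrite !ffunE.
by apply: leq_sub2l; case kF: (k \in F); rewrite ?(subsetP sFF' _ kF).
Qed.

(* Entry (R k, R j :\ v) of d_i vanishes unless R j :\ v = R k :\ l for some
   l in R k; since v \in R k but v \notin R j :\ v, this forces l = v and j = k,
   so the minor on these rows and columns is diagonal with entries +-1. *)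
Lemma kdiff_rank_ge_cone i v m (R : 'I_m -> {set 'I_n}) :
  (forall j, v \in R j) -> injective (fun j => R j :\ v) ->
  (forall j, [&& #|R j| == i, kvalid G b (R j) & kvalid G b (R j :\ v)]) ->
  (m <= \rank (kdiff K G b i))%N.
Proof.
move=> vR injR R_valid.
apply: (@mxrank_ge_diag_minor _ _ _ _ (fun j => enum_rank (R j))
                                     (fun k => enum_rank (R k :\ v))).
  move=> j; rewrite kdiffE R_valid (@sum_setD1_eq _ _ _ _ v) ?vR ?setD11 // eqxx.
  by rewrite expf_neq0 // oppr_eq0 oner_eq0.
move=> j k njk; rewrite kdiffE; case: ifP => // _.
rewrite (@sum_setD1_eq _ _ _ _ v) ?vR ?setD11 //; case: eqP => // /injR ejk.
by rewrite ejk eqxx in njk.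
Qed.

Section Cone.
Variables (i : nat) (v : 'I_n).
Hypothesis bv_pos : (0 < b v)%N.
Hypothesis cone_valid : forall F, F \in kbasis i -> v \in F -> kvalid G b (F :\ v).

Lemma kbasis_with_le_rank :
  (#|kbasis i :&: [set F : {set 'I_n} | v \in F]| <= \rank (kdiff K G b i))%N.
Proof.
set A := _ :&: _.
have RA (j : 'I_#|A|) : enum_val j \in A by exact: enum_valP.
apply: (@kdiff_rank_ge_cone _ v _ (fun j : 'I_#|A| => enum_val j)).
- by move=> j; have := RA j; rewrite !inE => /andP[_ ->].
- move=> j k /= ejk; apply: enum_val_inj.
  have := RA j; have := RA k; rewrite !inE => /andP[_ vk] /andP[_ vj].
  by rewrite -(setD1K vj) -(setD1K vk) ejk.
- move=> j; have := RA j; rewrite inE => /andP[jA]; rewrite inE => vj.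
  by move: (jA); rewrite inE => /andP[-> ->] /=; exact: cone_valid.
Qed.

Lemma kbasis_without_le_rank :
  (#|kbasis i :\: [set F : {set 'I_n} | v \in F]| <= \rank (kdiff K G b i.+1))%N.
Proof.
set A := _ :\: _.
have RA (j : 'I_#|A|) : enum_val j \in A by exact: enum_valP.
pose R (j : 'I_#|A|) := v |: (enum_val j : {set 'I_n}).
have RK j : R j :\ v = enum_val j.
  by apply: setU1K; have := RA j; rewrite !inE => /andP[-> _].
apply: (@kdiff_rank_ge_cone _ v _ R).
- by move=> j; rewrite setU11.
- by move=> j k /=; rewrite !RK => /enum_val_inj.
move=> j; rewrite RK; have := RA j; rewrite !inE => /andP[nvj /andP[/eqP cj j_valid]].
rewrite cardsU1 nvj cj eqxx j_valid /= andbT.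
apply: (kvalid_subset _ _ j_valid); first exact: subsetUr.
apply/forall_inP => k; rewrite in_setU1 => /orP[/eqP -> //|kj].
by case/andP: j_valid => /forall_inP/(_ k kj).
Qed.

Lemma betti_eq0_cone : betti K G i b = 0%N.
Proof.
rewrite /betti -/(kbasis i) -subnDA; apply/eqP; rewrite subn_eq0.
rewrite -(cardsID [set F : {set 'I_n} | v \in F] (kbasis i)).
exact: leq_add kbasis_with_le_rank kbasis_without_le_rank.
Qed.

End Cone.
End KoszulCone.

Lemma betti1_varpow (K : fieldType) n (G : seq (expvec n)) (v : 'I_n) (m : nat) :
  in_mideal G (varpow v m.+1) -> ~~ in_mideal G (varpow v m) ->
  betti K G 1 (varpow v m.+1) = 1%N.
Proof.
set b := varpow v m.+1 => Ib nIm.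
have supp_v F : kvalid G b F -> F \subset [set v].
  move=> /andP[/forall_inP b_pos _]; apply/subsetP => k kF; rewrite inE.
  by have := b_pos k kF; rewrite ffunE; case: eqP.
have basis1 : kbasis G b 1 = [set [set v]].
  apply/setP => F; rewrite !inE; apply/idP/idP.
    move=> /andP[/cards1P [x ->] x_valid]; have := supp_v _ x_valid.
    by rewrite sub1set inE => /eqP ->.
  move=> /eqP ->; rewrite cards1 /= /kvalid; apply/andP; split.
    by apply/forall_inP => k; rewrite inE => /eqP ->; rewrite ffunE eqxx.
  apply: contra nIm; apply: in_mideal_mono => k; rewrite !ffunE inE.
  by case: eqP => // _; rewrite subn1.
have d1_eq0 : kdiff K G b 1 = 0.
  apply/matrixP => p q; rewrite !mxE /=; case: ifP => // /and3P[/eqP cF _ H_valid].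
  apply: big1 => k kF; case: eqP => // HE; exfalso.
  have H0 : enum_val q = set0.
    by apply: cards0_eq; rewrite HE; move: cF; rewrite (cardsD1 k) kF add1n => -[].
  move: H_valid; rewrite H0 /kvalid => /andP[_]; apply/negP; rewrite negbK.
  by apply: in_mideal_mono Ib => j; rewrite !ffunE inE subn0.
have d2_eq0 : kdiff K G b 2 = 0.
  apply/matrixP => p q; rewrite !mxE /=; case: ifP => // /and3P[/eqP cF F_valid _].
  by have := subset_leq_card (supp_v _ F_valid); rewrite cards1 cF.
by rewrite /betti -/(kbasis G b 1) basis1 cards1 d1_eq0 d2_eq0 mxrank0.
Qed.

Section RegularityCriterion.
Variables (K : fieldType) (n : nat) (G : seq (expvec n)) (r : nat) (W : pred 'I_n).

Hypothesis W_divides : forall c : expvec n,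
  ~~ in_mideal G c -> (r < mdeg c)%N -> exists2 v, W v & (0 < c v)%N.
Hypothesis W_stable : forall (c : expvec n) v,
  ~~ in_mideal G c -> (r < mdeg c)%N -> W v -> ~~ in_mideal G (mulvar c v).

(* A face F0 yields the standard monomial b - 1_F0 of degree > r, hence some
   v in W with b v > 0; for every face F containing v, (b - 1_F) x_v is again
   standard, i.e. F :\ v is a face, and betti_eq0_cone applies. *)
Lemma betti_eq0_above (i : nat) (b : expvec n) :
  (r + i < mdeg b)%N -> betti K G i b = 0%N.
Proof.
move=> deg_b.
have face_std F : F \in kbasis G b i ->
    [/\ [forall k in F, (0 < b k)%N], ~~ in_mideal G [ffun k => (b k - (k \in F))%N]
      & (r < mdeg [ffun k => (b k - (k \in F))%N])%N].
  rewrite inE => /andP[/eqP cF /andP[b_pos F_std]]; split=> //.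
  by rewrite mdeg_sub_set // cF ltn_subRL addnC.
have [basis0|[F0 /face_std[_ F0_std F0_deg]]] := set_0Vmem (kbasis G b i).
  by rewrite /betti -/(kbasis G b i) basis0 cards0.
have [v Wv] := W_divides F0_std F0_deg; rewrite ffunE => /leq_trans/(_ (leq_subr _ _)) bv.
apply: (betti_eq0_cone K bv) => F F_basis vF.
have [b_pos F_std F_deg] := face_std F F_basis.
apply/andP; split.
  by apply/forall_inP => k; rewrite in_setD1 => /andP[_]; move/forall_inP: b_pos; apply.
suff -> : [ffun k => (b k - (k \in F :\ v))%N] = mulvar [ffun k => (b k - (k \in F))%N] v.
  exact: W_stable.
apply/ffunP => k; rewrite !ffunE in_setD1.
have [->|nkv] := eqVneq k v; last by rewrite addn0.
by rewrite /= vF subn0 addn1 subn1 prednK.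
Qed.

Lemma reg_le (i : nat) (b : expvec n) :
  betti K G i b <> 0%N -> (mdeg b)%:Z - i%:Z <= r%:Z.
Proof.
move=> betti_nz; rewrite lerBlDr -PoszD lez_nat leqNgt.
by apply: contra_notN betti_nz => /betti_eq0_above.
Qed.

Lemma is_reg_criterion (v : 'I_n) :
  in_mideal G (varpow v r.+1) -> ~~ in_mideal G (varpow v r) -> is_reg K G r%:Z.
Proof.
move=> pow_in pow_notin; split; last exact: reg_le.
exists 1%N, (varpow v r.+1); rewrite betti1_varpow // mdeg_varpow.
by split=> //; rewrite -addn1 PoszD addrK.
Qed.

End RegularityCriterion.

(** * Hilbert series *)

Definition bdiff (H : nat -> int) (m : nat) : int :=
  if m is m'.+1 then H m - H m' else H 0%N.

(* The m-th coefficient of (1 - X)^d * \sum_k H k X^k (see hcoef_poly), the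
   right-hand side of is_hpoly. *)
Definition hcoef (d : nat) (H : nat -> int) (m : nat) : int :=
  \sum_(j < (minn m d).+1) (-1) ^+ j * ('C(d, j))%:Z * H (m - j)%N.

Lemma eq_bdiff H H' : H =1 H' -> bdiff H =1 bdiff H'.
Proof. by move=> eqH [|m] /=; rewrite ?eqH. Qed.

Lemma eq_hcoef d H H' : H =1 H' -> hcoef d H =1 hcoef d H'.
Proof. by move=> eqH m; apply: eq_bigr => j _; rewrite eqH. Qed.

Lemma hcoef_widen d H m :
  hcoef d H m = \sum_(j < m.+1) (-1) ^+ j * ('C(d, j))%:Z * H (m - j)%N.
Proof.
have le_md : ((minn m d).+1 <= m.+1)%N by rewrite ltnS geq_minl.
rewrite /hcoef (big_ord_widen _ (fun j => (-1) ^+ j * ('C(d, j))%:Z * H (m - j)%N) le_md).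
rewrite big_mkcond /=; apply: eq_bigr => j _; case: ifP => // /negbT.
rewrite ltnS leq_min negb_and -!ltnNge ltnNge -ltnS ltn_ord /= => lt_dj.
by rewrite bin_small // mulr0 mul0r.
Qed.

Lemma hcoef0 H : hcoef 0 H =1 H.
Proof.
move=> m; rewrite hcoef_widen big_ord_recl /= big1 ?addr0 ?subn0 ?mul1r //.
by move=> i _; rewrite bin0n /= mulr0 mul0r.
Qed.

Lemma hcoefS d H : hcoef d.+1 H =1 bdiff (hcoef d H).
Proof.
case=> [|m].
  by rewrite /= !hcoef_widen !big_ord_recl !big_ord0 /= !bin0 !addr0.
rewrite /bdiff !hcoef_widen big_ord_recl /= bin0 expr0 !mul1r subn0.
under eq_bigr => i _ do rewrite /bump /= add1n subSS binS PoszD mulrDr mulrDl.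
rewrite big_split /= addrA; congr (_ + _).
  by rewrite [in RHS]big_ord_recl /= bin0 expr0 !mul1r subn0.
by rewrite -sumrN; apply: eq_bigr => i _; rewrite exprS !mulN1r !mulNr.
Qed.

Lemma hcoefSr d H : hcoef d.+1 H =1 hcoef d (bdiff H).
Proof.
elim: d H => [|d IH] H m.
  by rewrite hcoefS hcoef0; apply: eq_bdiff => x; rewrite hcoef0.
by rewrite hcoefS (hcoefS d); apply: eq_bdiff => x; exact: IH.
Qed.

Lemma hcoefD d H H' m : hcoef d (fun k => H k + H' k) m = hcoef d H m + hcoef d H' m.
Proof. by rewrite /hcoef -big_split; apply: eq_bigr => j _; rewrite mulrDr. Qed.

Lemma hcoef_poly d (q : {poly int}) m : hcoef d (fun k => q`_k) m = ((1 - 'X) ^+ d * q)`_m.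
Proof.
elim: d m => [|d IH] m; first by rewrite hcoef0 expr0 mul1r.
rewrite hcoefS (eq_bdiff IH) exprS -mulrA mulrBl mul1r coefB coefXM.
by case: m => [|m] //=; rewrite subr0.
Qed.

Lemma hcoef_binom w m : hcoef w.+1 (fun k => ('C(w + k, w))%:Z) m = (m == 0%N)%:Z.
Proof.
elim: w m => [|w IH] m.
  rewrite hcoefS (@eq_bdiff _ (fun _ => 1)); last by move=> x; rewrite hcoef0 add0n bin0.
  by case: m.
rewrite hcoefSr -IH; apply: eq_hcoef => -[|k] /=; first by rewrite !addn0 !binn.
by rewrite addnS binS PoszD addrC addKr addSnnS.
Qed.

Definition nmonomials (d k : nat) : nat :=
  #|[set a : {ffun 'I_d -> 'I_k.+1} | (\sum_(i < d) (a i : nat) == k)%N]|.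

Lemma nmonomials_binom w k : nmonomials w.+1 k = 'C(w + k, w).
Proof.
rewrite -card_ord_partitions /nmonomials.
pose f (t : w.+1.-tuple 'I_k.+1) := [ffun i => tnth t i].
have f_inj : injective f.
  by move=> t1 t2 /ffunP eqf; apply: eq_from_tnth => i; have := eqf i; rewrite !ffunE.
rewrite -(card_imset _ f_inj); apply: eq_card => a; rewrite inE.
apply/idP/imsetP.
  move=> sum_a; exists [tuple a i | i < w.+1].
    by rewrite inE big_tuple; under eq_bigr => i _ do rewrite tnth_mktuple.
  by apply/ffunP => i; rewrite ffunE tnth_mktuple.
move=> [t]; rewrite inE big_tuple => sum_t ->.
by under eq_bigr => i _ do rewrite ffunE.
Qed.

Lemma nmonomials0 k : nmonomials 0 k = (k == 0%N).
Proof.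
rewrite /nmonomials; case: k => [|k].
  rewrite (_ : [set _ | _] = setT) ?cardsT ?card_ffun ?card_ord ?expn0 //.
  by apply/setP => a; rewrite !inE big_ord0.
rewrite (_ : [set _ | _] = set0) ?cards0 //.
by apply/setP => a; rewrite !inE big_ord0.
Qed.

Lemma hcoef_nmonomials d m : hcoef d (fun k => (nmonomials d k)%:Z) m = (m == 0%N)%:Z.
Proof.
case: d => [|w]; first by rewrite hcoef0 nmonomials0.
by rewrite -(hcoef_binom w); apply: eq_hcoef => x; rewrite nmonomials_binom.
Qed.

Definition stdmon n (G : seq (expvec n)) (k : nat) :=
  [set a : {ffun 'I_n -> 'I_k.+1} |
    ((\sum_(i < n) (a i : nat))%N == k) && ~~ in_mideal G [ffun i => (a i : nat)]].

Lemma hilbf_cardID n (G : seq (expvec n)) k (B : {set {ffun 'I_n -> 'I_k.+1}}) :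
  hilbf G k = (#|stdmon G k :&: B| + #|stdmon G k :\: B|)%N.
Proof. by rewrite cardsID. Qed.

(** * The case r <= s *)

Section FamilyA.
Variables (e a : nat).
Implicit Type c : expvec e.+1.

Definition gA (j : 'I_e) : expvec e.+1 := [ffun i => ((i == ord0) + (i == lift ord0 j))%N].
Definition GA : seq (expvec e.+1) := varpow ord0 a.+1 :: [seq gA j | j <- enum 'I_e].

Lemma in_GA c :
  in_mideal GA c =
  (a.+1 <= c ord0)%N || (0 < c ord0)%N && [exists j, (0 < c (lift ord0 j))%N].
Proof.
rewrite /in_mideal /= has_map; congr (_ || _).
  apply/forallP/idP => [/(_ ord0)|le_ac i]; first by rewrite ffunE eqxx.
  by rewrite ffunE; case: eqP => [->|].
apply/hasP/andP => [[j _ /forallP gA_c]|[c0 /existsP [j cj]]].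
  split; first by have := gA_c ord0; rewrite ffunE eqxx.
  by apply/existsP; exists j; have := gA_c (lift ord0 j); rewrite ffunE eqxx lift_eqF.
exists j; first by rewrite mem_enum.
apply/forallP => i; rewrite ffunE /=.
have [->|ni0] := eqVneq i ord0; first by rewrite eq_sym lift_eqF.
by case: eqP => [->|].
Qed.

Lemma notin_GA_high c : ~~ in_mideal GA c -> (a < mdeg c)%N ->
  c ord0 = 0%N /\ [exists j, (0 < c (lift ord0 j))%N].
Proof.
rewrite in_GA negb_or -leqNgt => /andP[c0_le c_std] deg_c.
have c_lift : [exists j, (0 < c (lift ord0 j))%N].
  apply: contraLR deg_c; rewrite negb_exists => /forallP c_lift0.
  rewrite -leqNgt /mdeg big_ord_recl big1 ?addn0 // => j _.
  by apply/eqP; rewrite -leqn0 leqNgt c_lift0.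
by split=> //; move: c_std; rewrite c_lift andbT lt0n negbK => /eqP.
Qed.

Lemma is_reg_GA (K : fieldType) : is_reg K GA a%:Z.
Proof.
apply: (@is_reg_criterion K _ _ _ (fun i => i != ord0) _ _ ord0).
- move=> c c_std deg_c; have [_ /existsP [j cj]] := notin_GA_high c_std deg_c.
  by exists (lift ord0 j) => //; rewrite lift_eqF.
- move=> c v c_std deg_c /negPf v0; have [c0 _] := notin_GA_high c_std deg_c.
  by rewrite in_GA !ffunE c0 eq_sym v0.
- by rewrite in_GA ffunE eqxx leqnn.
- rewrite in_GA ffunE eqxx ltnn /=; apply/negP => /andP[_ /existsP [j]].
  by rewrite ffunE lift_eqF.
Qed.

Lemma krull_dim_GA : krull_dim GA e.
Proof.
have g0_pos g : g \in GA -> (0 < g ord0)%N.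
  by rewrite inE => /orP[/eqP ->|/mapP [j _ ->]]; rewrite ffunE eqxx.
split.
  exists [set~ ord0]; split; last by rewrite cardsC1 card_ord.
  apply/hasPn => g gG; apply/negP => /forallP /(_ ord0).
  by rewrite g0_pos //= !inE eqxx.
move=> F /hasPn /(_ _ (mem_head _ _)) /= F_indep.
have : F \subset [set~ ord0].
  apply/subsetP => i iF; rewrite !inE; apply: contra F_indep => /eqP i0.
  by apply/forall_inP => k; rewrite ffunE; case: eqP => // -> _; rewrite -i0.
by move/subset_leq_card; rewrite cardsC1 card_ord.
Qed.

Section HilbertFunction.
Variable k : nat.
Let B := [set x : {ffun 'I_e.+1 -> 'I_k.+1} | (x ord0 : nat) == 0%N].

Lemma sum_lift0 (x : {ffun 'I_e.+1 -> 'I_k.+1}) :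
  (\sum_(i < e.+1) (x i : nat) = x ord0 + \sum_(j < e) x (lift ord0 j))%N.
Proof. by rewrite big_ord_recl. Qed.

Lemma card_stdmon_GA_free : #|stdmon GA k :&: B| = nmonomials e k.
Proof.
pose f (y : {ffun 'I_e -> 'I_k.+1}) :=
  [ffun i => if unlift ord0 i is Some j then y j else ord0].
have f_inj : injective f.
  move=> y1 y2 /ffunP eqf; apply/ffunP => j.
  by have := eqf (lift ord0 j); rewrite !ffunE liftK.
rewrite /nmonomials -(card_imset _ f_inj); apply: eq_card => x; rewrite !inE.
apply/idP/imsetP.
  move=> /andP[/andP[sum_x _] /eqP x0]; exists [ffun j => x (lift ord0 j)].
    by rewrite inE; under eq_bigr => j _ do rewrite ffunE; rewrite sum_lift0 x0 in sum_x.
  apply/ffunP => i; rewrite ffunE; case: unliftP => [j ->|->]; first by rewrite ffunE.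
  by apply: val_inj; rewrite /= x0.
move=> [y]; rewrite inE => sum_y ->.
have fy0 : f y ord0 = ord0 by rewrite ffunE unlift_none.
rewrite fy0 eqxx andbT sum_lift0 fy0 add0n.
under eq_bigr => j _ do rewrite ffunE liftK.
by rewrite sum_y in_GA !ffunE unlift_none.
Qed.

Lemma card_stdmon_GA_pure : #|stdmon GA k :\: B| = ((0 < k) && (k <= a))%N.
Proof.
pose xk : {ffun 'I_e.+1 -> 'I_k.+1} := [ffun i => if i == ord0 then ord_max else ord0].
have xk0 : xk ord0 = ord_max by rewrite ffunE eqxx.
have xk_lift j : xk (lift ord0 j) = ord0 by rewrite ffunE lift_eqF.
have sub_xk : stdmon GA k :\: B \subset [set xk].
  apply/subsetP => x; rewrite !inE => /andP[x0 /andP[sum_x]].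
  rewrite in_GA !ffunE negb_or lt0n x0 /= => /andP[_ /existsPn x_lift].
  have x_lift0 j : (x (lift ord0 j) : nat) = 0%N.
    by apply/eqP; rewrite -leqn0 leqNgt; have := x_lift j; rewrite ffunE.
  move: sum_x; rewrite sum_lift0 big1 ?addn0 => [/eqP sum_x|j _]; last exact: x_lift0.
  apply/eqP/ffunP => i; case: (unliftP ord0 i) => [j ->|->]; apply: val_inj.
    by rewrite xk_lift /= x_lift0.
  by rewrite xk0 /= sum_x.
have xk_in : (xk \in stdmon GA k :\: B) = (0 < k)%N && (k <= a)%N.
  rewrite !inE sum_lift0 xk0 big1 ?addn0 => [|j _]; last by rewrite xk_lift.
  rewrite in_GA !ffunE eqxx -lt0n negb_or -leqNgt.
  have -> : [exists j, (0 < [ffun i => (xk i : nat)] (lift ord0 j))%N] = false.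
    by apply/existsPn => j; rewrite ffunE xk_lift.
  by rewrite andbF /= eqxx andbT.
case: (boolP ((0 < k)%N && (k <= a)%N)) => [kk|nkk] /=.
  apply/eqP; rewrite eqn_leq -(cards1 xk) !subset_leq_card //.
  by rewrite sub1set xk_in.
apply/eqP; rewrite cards_eq0 -subset0; apply/subsetP => x x_in.
have := subsetP sub_xk x x_in; rewrite inE => /eqP xe.
by rewrite xe xk_in (negPf nkk) in x_in.
Qed.

End HilbertFunction.

Lemma hilbf_GA k : hilbf GA k = (nmonomials e k + ((0 < k) && (k <= a)))%N.
Proof.
rewrite (hilbf_cardID _ [set x : {ffun 'I_e.+1 -> 'I_k.+1} | (x ord0 : nat) == 0%N]).
by rewrite card_stdmon_GA_free card_stdmon_GA_pure.
Qed.

Definition qA : {poly int} := \poly_(i < a.+1) (i != 0%N)%:R.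
Definition hA : {poly int} := 1 + (1 - 'X) ^+ e * qA.

Lemma coef_qA k : qA`_k = ((0 < k)%N && (k <= a)%N : nat)%:Z.
Proof. by rewrite coef_poly ltnS lt0n andbC; case: (k <= a)%N; rewrite // natz. Qed.

Lemma is_hpoly_GA : is_hpoly GA hA.
Proof.
exists e; split=> [|m]; first exact: krull_dim_GA.
change (hA`_m = hcoef e (fun k => (hilbf GA k)%:Z) m).
rewrite (@eq_hcoef _ _ (fun k => (nmonomials e k)%:Z + qA`_k)).
  by rewrite hcoefD hcoef_nmonomials hcoef_poly coefD coef1 natz.
by move=> k; rewrite hilbf_GA PoszD coef_qA.
Qed.

Lemma size_hA : (0 < a)%N -> (size hA).-1 = (a + e)%N.
Proof.
move=> a_pos.
have size_qA : size qA = a.+1 by rewrite size_poly_eq //= -lt0n a_pos oner_eq0.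
have size_1subX : size (1 - 'X : {poly int}) = 2%N.
  by rewrite -opprB size_polyN -polyC1 size_XsubC.
have size_pow : size ((1 - 'X : {poly int}) ^+ e) = e.+1.
  have := size_exp (1 - 'X : {poly int}) e; rewrite size_1subX mul1n => size_pred.
  rewrite -[in RHS]size_pred prednK // lt0n size_poly_eq0 expf_neq0 //.
  by rewrite -size_poly_eq0 size_1subX.
rewrite /hA addrC size_polyDl size_mul -?size_poly_eq0 ?size_pow ?size_qA //.
  by rewrite addSn addnS addnC.
by rewrite size_poly1 addSn addnS /= ltnS addn_gt0 a_pos orbT.
Qed.

End FamilyA.

(** * The case r > s *)

Section FamilyB.
Variables (s p : nat).
Local Notation r := (s + p)%N.
Local Notation N := p.+2.
Implicit Type c : expvec N.

Definition yB : 'I_N := ord0.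
Definition zB : 'I_N := lift ord0 ord0.
Definition xB (j : 'I_p) : 'I_N := lift ord0 (lift ord0 j).

Lemma xB_yB j : (xB j == yB) = false. Proof. exact: lift_eqF. Qed.
Lemma xB_zB j : (xB j == zB) = false.
Proof. by rewrite (inj_eq (@lift_inj _ _)) lift_eqF. Qed.
Lemma zB_yB : (zB == yB) = false. Proof. exact: lift_eqF. Qed.
Lemma xB_eq j j' : (xB j == xB j') = (j == j').
Proof. by rewrite !(inj_eq (@lift_inj _ _)). Qed.

Lemma varB_ind (P : 'I_N -> Prop) :
  P yB -> P zB -> (forall j, P (xB j)) -> forall i, P i.
Proof.
move=> Py Pz Px i; case: (unliftP ord0 i) => [i' ->|->] //.
by case: (unliftP ord0 i') => [j ->|->] //; exact: Px.
Qed.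

Lemma sum_varB (f : 'I_N -> nat) :
  (\sum_(i < N) f i = f yB + (f zB + \sum_(j < p) f (xB j)))%N.
Proof. by rewrite !big_ord_recl. Qed.

Definition gxx (jj : 'I_p * 'I_p) : expvec N :=
  [ffun i => ((i == xB jj.1) + (i == xB jj.2))%N].
Definition gxy (j : 'I_p) : expvec N := [ffun i => ((i == xB j) + (i == yB))%N].
Definition gxz (j : 'I_p) : expvec N := [ffun i => ((i == xB j) + (i == zB) * (s + j))%N].

Definition GB : seq (expvec N) :=
  varpow yB r.+1 :: [seq gxx jj | jj <- enum {: 'I_p * 'I_p}] ++
  [seq gxy j | j <- enum 'I_p] ++ [seq gxz j | j <- enum 'I_p].

Definition stdB c : Prop :=
  (forall j, c (xB j) = 0%N) /\ (c yB <= r)%N \/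
  exists j, [/\ c (xB j) = 1%N, (forall j', j' != j -> c (xB j') = 0%N),
                c yB = 0%N & (c zB < s + j)%N].

Lemma mem_gxx jj : gxx jj \in GB. Proof. by rewrite inE mem_cat map_f ?mem_enum ?orbT. Qed.
Lemma mem_gxy j : gxy j \in GB. Proof. by rewrite inE !mem_cat map_f ?orbT ?mem_enum. Qed.
Lemma mem_gxz j : gxz j \in GB. Proof. by rewrite inE !mem_cat map_f ?orbT ?mem_enum. Qed.

Lemma notin_GBP c : reflect (stdB c) (~~ in_mideal GB c).
Proof.
apply: (iffP idP) => [/hasPn c_std|sc].
  have ndiv g : g \in GB -> ~~ mdivides g c by move/c_std.
  have cy : (c yB <= r)%N.
    rewrite leqNgt; apply: contra (ndiv _ (mem_head _ _)) => lt_rc.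
    by apply/forallP => i; rewrite ffunE; case: eqP => [->|].
  have [/existsP [j cj]|nx] := boolP [exists j, (0 < c (xB j))%N]; last first.
    left; split => // j; apply/eqP; rewrite -leqn0 leqNgt.
    by apply: contra nx => cj; apply/existsP; exists j.
  right; exists j; split.
  - apply/eqP; rewrite eqn_leq cj andbT leqNgt.
    apply: contra (ndiv _ (mem_gxx (j, j))) => cj2.
    by apply/forallP => i; rewrite ffunE /=; case: (eqVneq i (xB j)) => [->|].
  - move=> j' nj; apply/eqP; rewrite -leqn0 leqNgt.
    apply: contra (ndiv _ (mem_gxx (j, j'))) => cj'.
    apply/forallP => i; rewrite ffunE /=.
    case: (eqVneq i (xB j)) => [->|nij]; first by rewrite xB_eq eq_sym (negPf nj).
    by case: (eqVneq i (xB j')) => [->|].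
  - apply/eqP; rewrite -leqn0 leqNgt; apply: contra (ndiv _ (mem_gxy j)) => cy_pos.
    apply/forallP => i; rewrite ffunE /=.
    case: (eqVneq i (xB j)) => [->|nij]; first by rewrite xB_yB.
    by case: (eqVneq i yB) => [->|].
  - rewrite ltnNge; apply: contra (ndiv _ (mem_gxz j)) => cz.
    apply/forallP => i; rewrite ffunE /=.
    case: (eqVneq i (xB j)) => [->|nij]; first by rewrite xB_zB mul0n addn0.
    by case: (eqVneq i zB) => [->|]; rewrite ?mul1n ?mul0n.
apply/hasPn => g; rewrite inE !mem_cat => /orP[/eqP ->|/or3P[]].
- apply/negP => /forallP /(_ yB); rewrite ffunE eqxx.
  by case: sc => [[_ cy]|[j [_ _ -> _]]]; first by rewrite ltnNge cy.
- move=> /mapP [[j1 j2] _ ->]; apply/negP => /forallP gxx_c.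
  have := gxx_c (xB j1); have := gxx_c (xB j2); rewrite !ffunE /= !eqxx => c2 c1'.
  case: sc => [[cx _]|[j [c1 c0 _ _]]]; first by move: c1'; rewrite cx.
  have e1 : j1 = j by apply/eqP; apply: contraLR c1' => /c0 ->; rewrite -ltnNge.
  have e2 : j2 = j by apply/eqP; apply: contraLR c2 => /c0 ->; rewrite addn1.
  by move: c1'; rewrite e1 e2 eqxx c1.
- move=> /mapP [j1 _ ->]; apply/negP => /forallP gxy_c.
  have := gxy_c (xB j1); have := gxy_c yB; rewrite !ffunE !eqxx xB_yB eq_sym xB_yB.
  by case: sc => [[cx _]|[j [c1 c0 -> _]]]; rewrite ?cx.
- move=> /mapP [j1 _ ->]; apply/negP => /forallP gxz_c.
  have := gxz_c (xB j1); have := gxz_c zB; rewrite !ffunE !eqxx xB_zB => cz' c1'.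
  case: sc => [[cx _]|[j [c1 c0 _ cz]]]; first by move: c1'; rewrite cx.
  have e1 : j1 = j by apply/eqP; apply: contraLR c1' => /c0 ->; rewrite -ltnNge.
  by move: cz' cz; rewrite eq_sym xB_zB e1 mul1n add0n => cz'; rewrite ltnNge cz'.
Qed.

Lemma mdeg_varB c : mdeg c = (c yB + (c zB + \sum_(j < p) c (xB j)))%N.
Proof. exact: sum_varB. Qed.

Lemma notin_GB_high c : ~~ in_mideal GB c -> (r < mdeg c)%N ->
  (forall j, c (xB j) = 0%N) /\ (c yB <= r)%N.
Proof.
move/notin_GBP => [//|[j [c1 c0 cy cz]]]; rewrite mdeg_varB cy (bigD1 j) //=.
rewrite big1 ?c1 ?addn0 => [deg_c|j' nj]; last exact: c0.
by have := ltn_ord j; lia.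
Qed.

Lemma is_reg_GB (K : fieldType) : is_reg K GB r%:Z.
Proof.
apply: (@is_reg_criterion K _ _ _ (pred1 zB) _ _ yB).
- move=> c c_std deg_c; exists zB => //; have [cx cy] := notin_GB_high c_std deg_c.
  move: deg_c; rewrite mdeg_varB big1 ?addn0 => [deg_c|j _]; last exact: cx.
  by rewrite lt0n; apply: contraTneq deg_c => ->; rewrite addn0 -leqNgt.
- move=> c v c_std deg_c /eqP ->; have [cx cy] := notin_GB_high c_std deg_c.
  apply/notin_GBP; left; split => [j|]; rewrite ffunE ?xB_zB ?cx //.
  by rewrite eq_sym zB_yB addn0.
- by apply/hasP; exists (varpow yB r.+1); rewrite ?mem_head //; apply/forallP => i.
- by apply/notin_GBP; left; split => [j|]; rewrite ffunE ?xB_yB ?eqxx.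
Qed.

Lemma krull_dim_GB : krull_dim GB 1.
Proof.
split.
  exists [set zB]; split; last by rewrite cards1.
  apply/hasPn => g; rewrite inE !mem_cat => /orP[/eqP ->|/or3P[]].
  - by apply/negP => /forallP /(_ yB); rewrite ffunE eqxx inE eq_sym zB_yB.
  - by move=> /mapP [[j1 j2] _ ->]; apply/negP => /forallP /(_ (xB j1));
      rewrite ffunE eqxx inE xB_zB.
  - by move=> /mapP [j1 _ ->]; apply/negP => /forallP /(_ (xB j1));
      rewrite ffunE eqxx inE xB_zB.
  - by move=> /mapP [j1 _ ->]; apply/negP => /forallP /(_ (xB j1));
      rewrite ffunE eqxx inE xB_zB.
move=> F /hasPn F_indep.
suff : F \subset [set zB] by move/subset_leq_card; rewrite cards1.
apply/subsetP; apply: varB_ind => [yF|_|j xF]; rewrite inE ?eqxx //; exfalso.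
  case/negP: (F_indep _ (mem_head _ _)); apply/forallP => k; apply/implyP.
  by rewrite ffunE; case: eqP => [-> _|].
case/negP: (F_indep _ (mem_gxx (j, j))); apply/forallP => k; apply/implyP.
by rewrite ffunE /= addnn; case: (eqVneq k (xB j)) => [-> _|].
Qed.

Section HilbertFunction.
Variable k : nat.
Let B := [set x : {ffun 'I_N -> 'I_k.+1} | [forall j, (x (xB j) : nat) == 0%N]].

Lemma card_stdmon_GB_xfree : #|stdmon GB k :&: B| = (minn k r).+1.
Proof.
have u_le_k (u : 'I_(minn k r).+1) : (u <= k)%N.
  by have := ltn_ord u; rewrite ltnS leq_min => /andP[].
pose f (u : 'I_(minn k r).+1) : {ffun 'I_N -> 'I_k.+1} :=
  [ffun i => if i == yB then inord u else if i == zB then inord (k - u) else ord0].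
have fy u : f u yB = inord u by rewrite ffunE eqxx.
have fz u : f u zB = inord (k - u) by rewrite ffunE zB_yB eqxx.
have fx u j : f u (xB j) = ord0 by rewrite ffunE xB_yB xB_zB.
have f_inj : injective f.
  move=> u u' /ffunP /(_ yB); rewrite !fy => /(congr1 val) /=.
  by rewrite !inordK ?ltnS ?u_le_k // => /val_inj.
rewrite -[RHS]card_ord -cardsT -(card_imset _ f_inj); apply: eq_card => x.
rewrite !inE; apply/idP/imsetP.
  move=> /andP[/andP[sum_x /notin_GBP x_std] /forallP x_xfree].
  have x0 j : (x (xB j) : nat) = 0%N by apply/eqP; exact: x_xfree.
  have sum_yz : (x yB + x zB = k)%N.
    by move: sum_x; rewrite sum_varB big1 ?addn0 ?addnA => [/eqP|j _] //; rewrite x0.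
  have xy_le : (x yB <= minn k r)%N.
    have xy_k : (x yB <= k)%N by have := leq_addr (x zB) (x yB); rewrite sum_yz.
    rewrite leq_min xy_k /=.
    by case: x_std => [[_]|[j [+ _ _ _]]]; rewrite !ffunE ?x0.
  exists (Ordinal (xy_le : (x yB < (minn k r).+1)%N)); rewrite ?inE //.
  apply/ffunP; apply: varB_ind => [|| j]; rewrite ?fy ?fz ?fx; apply: val_inj.
  - by rewrite /= inordK // ltnS (leq_trans xy_le) ?geq_minl.
  - rewrite /= inordK ?ltnS ?leq_subr //; apply/eqP.
    by rewrite -(eqn_add2l (x yB)) subnKC ?sum_yz // (leq_trans xy_le) ?geq_minl.
  - by rewrite /= x0.
move=> [u _ ->]; apply/andP; split; last by apply/forallP => j; rewrite fx.
rewrite sum_varB fy fz big1 => [|j _]; last by rewrite fx.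
rewrite addn0 !inordK ?ltnS ?leq_subr ?u_le_k // subnKC ?u_le_k // eqxx /=.
apply/notin_GBP; left; split => [j|]; rewrite ffunE ?fx // fy inordK ?ltnS ?u_le_k //.
by have := ltn_ord u; rewrite ltnS leq_min => /andP[].
Qed.

Lemma card_stdmon_GB_x : #|stdmon GB k :\: B| = if k == 0%N then 0%N else (p - (k - s))%N.
Proof.
pose A := [set j : 'I_p | (0 < k)%N && (k <= s + j)%N].
have card_A : #|A| = if k == 0%N then 0%N else (p - (k - s))%N.
  case: (posnP k) => [k0|k_pos].
    by apply/eqP; rewrite cards_eq0; apply/eqP/setP => j; rewrite !inE k0.
  by rewrite -card_ord_geq; apply: eq_card => j; rewrite !inE k_pos leq_subLR.
pose f (j : 'I_p) : {ffun 'I_N -> 'I_k.+1} :=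
  [ffun i => if i == xB j then inord 1 else if i == zB then inord k.-1 else ord0].
have fx j j' : f j (xB j') = if j' == j then inord 1 else ord0.
  by rewrite ffunE xB_eq xB_zB.
have fy j : f j yB = ord0 by rewrite ffunE eq_sym xB_yB eq_sym zB_yB.
have fz j : f j zB = inord k.-1 by rewrite ffunE eq_sym xB_zB eqxx.
clearbody f.
have f_inj : {in A &, injective f}.
  move=> j j'; rewrite inE => /andP[k_pos _] _ /ffunP /(_ (xB j)); rewrite !fx eqxx.
  by case: eqP => // _ /(congr1 val); rewrite /= inordK.
rewrite -card_A -(card_in_imset f_inj); apply: eq_card => x; rewrite !inE.
apply/idP/imsetP.
  move=> /andP[/forallPn [j xj] /andP[sum_x /notin_GBP]].
  case=> [[x_xfree _]|[j' [xj' x0 xy xz]]].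
    by have := x_xfree j; rewrite ffunE => /eqP; rewrite (negPf xj).
  move: xj' x0 xy xz; rewrite !ffunE => xj' x0 xy xz.
  have sum_zx : (x zB + 1 = k)%N.
    move: sum_x; rewrite sum_varB xy add0n (bigD1 j') //=.
    rewrite big1 ?addn0 ?xj' => [/eqP //|i ni].
    by have := x0 i ni; rewrite ffunE.
  have k_pos : (0 < k)%N by rewrite -sum_zx addn1.
  exists j'; first by rewrite /A inE k_pos -sum_zx addn1.
  apply/ffunP; apply: varB_ind => [|| i]; rewrite ?fy ?fz ?fx; apply: val_inj.
  - by rewrite /= xy.
  - rewrite /= inordK ?ltnS ?leq_pred //.
    by apply/eqP; rewrite -(eqn_add2r 1) sum_zx addn1 prednK.
  case: eqP => [->|ni]; first by rewrite /= inordK ?xj'.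
  by have := x0 i (introN eqP ni); rewrite ffunE.
move=> [j]; rewrite inE => /andP[k_pos k_le] ->.
apply/andP; split.
  by apply/forallPn; exists j; rewrite fx eqxx inordK.
rewrite sum_varB fy fz (bigD1 j) //= fx eqxx big1 => [|i ni]; last by rewrite fx (negPf ni).
rewrite !inordK ?addn0 ?add0n ?addn1 ?prednK // ?ltnS ?leq_pred // eqxx /=.
apply/notin_GBP; right; exists j; rewrite !ffunE fx eqxx fy fz inordK //; split => //.
- by move=> i ni; rewrite ffunE fx (negPf ni).
- by rewrite inordK ?ltnS ?leq_pred // -ltnS prednK.
Qed.

End HilbertFunction.

Lemma hilbf_GB k :
  hilbf GB k = ((minn k r).+1 + if k == 0%N then 0%N else p - (k - s))%N.
Proof.
pose B := [set x : {ffun 'I_N -> 'I_k.+1} | [forall j, (x (xB j) : nat) == 0%N]].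
by rewrite (hilbf_cardID _ B) card_stdmon_GB_xfree card_stdmon_GB_x.
Qed.

Definition hB : {poly int} := \poly_(i < s.+1) (if i == 1%N then p.+1 else 1%N)%:Z.

Lemma is_hpoly_GB : (0 < s)%N -> is_hpoly GB hB.
Proof.
move=> s_pos; exists 1%N; split=> [|m]; first exact: krull_dim_GB.
change (hB`_m = hcoef 1%N (fun k => (hilbf GB k)%:Z) m).
rewrite hcoefS (eq_bdiff (hcoef0 _)) coef_poly.
by case: m => [|[|m]] /=; rewrite !hilbf_GB ?ltnS ?s_pos //=; [lia | lia | case: ifP; lia].
Qed.

Lemma size_hB : (0 < s)%N -> (size hB).-1 = s.
Proof.
move=> s_pos; rewrite size_poly_eq //.
by case: s s_pos => [|[|s']].
Qed.

End FamilyB.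

Theorem theorem0p2 (K : fieldType) (r s : nat) :
  (1 <= r)%N -> (1 <= s)%N ->
  exists (n : nat) (G : seq (expvec n)),
    is_reg K G r%:Z /\
    exists h : {poly int}, is_hpoly G h /\ (size h).-1 = s.
Proof.
move=> r_pos s_pos; have [le_rs|lt_sr] := leqP r s.
  exists (s - r).+1, (GA (s - r) r); split; first exact: is_reg_GA.
  exists (hA (s - r) r); split; first exact: is_hpoly_GA.
  by rewrite size_hA // subnKC.
exists (r - s).+2, (GB s (r - s)); split.
  by have := is_reg_GB s (r - s) K; rewrite subnKC // ltnW.
by exists (hB s (r - s)); split; [exact: is_hpoly_GB | exact: size_hB].
Qed.
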